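(* Let $n\ge3$ and $x^\Lambda\partial_k\in\mathcal{B}$. Then $\mathrm{WD}(x^\Lambda\partial_k)\ge n-k$, with equality if and only if $x^\Lambda\partial_k=x_1^{\lambda_1}\partial_k$. Moreover, if $\mathrm{lev}_i(x^\Lambda\partial_k)\le i$ for some integer $i\ge-1$, then $\mathrm{WD}(x^\Lambda\partial_k)\le n-1$, with equality if and only if $x^\Lambda\partial_k=\partial_1$.
   Context: Fix an integer $n\ge 3$. A partition is a sequence $\Lambda=(\lambda_j)_{j\ge1}$ of non-negative integers with finite support; $\mathrm{wt}(\Lambda)=\sum_j j\lambda_j$; $\mathrm{Part}(k)$ is the set of partitions with $\lambda_j=0$ for $j>k$. Write $x^\Lambda=\prod_j x_j^{\lambda_j}$, $\deg(x^\Lambda)=\sum_j\lambda_j$. $\mathcal{B}=\{x^\Lambda\partial_k : 1\le k\le n,\ \Lambda\in\mathrm{Part}(k-1)\}$. For an integer $i\ge-1$, let $r_i\in\{1,\dots,n-1\}$ with $i\equiv r_i\pmod{n-1}$ and $h_i=\lfloor (i-1)/(n-1)\rfloor+1$. Define $\mathrm{WD}(x^\Lambda\partial_k)=\mathrm{wt}(\Lambda)-\deg(x^\Lambda)+n-k$ and $\mathrm{lev}_i(x^\Lambda\partial_k)=h_i\,\mathrm{WD}(x^\Lambda\partial_k)+\deg(x^\Lambda)-1$. *)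

From mathcomp Require Import all_boot all_order all_algebra.
Set Implicit Arguments. Unset Strict Implicit. Unset Printing Implicit Defensive.
Import Order.TTheory GRing.Theory Num.Theory.
Local Open Scope ring_scope.

(* A partition Lambda = (lambda_j)_{j>=1} is represented by lam : nat -> nat,
   lambda_j = lam j for j >= 1 (the value lam 0 is never used).
   x^Lambda d_k is in B iff 1 <= k <= n and Lambda in Part(k-1),
   i.e. lambda_j = 0 for all j > k-1. *)
Definition inB (n k : nat) (lam : nat -> nat) : Prop :=
  (1 <= k <= n)%N /\ (forall j : nat, (k <= j)%N -> lam j = 0%N).

(* weight and degree; since the support of Lambda lies in [1, k-1],
   the sums over 1 <= j < k are the full (finite-support) sums. *)
Definition wt (k : nat) (lam : nat -> nat) : nat := (\sum_(1 <= j < k) j * lam j)%N.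
Definition deg (k : nat) (lam : nat -> nat) : nat := (\sum_(1 <= j < k) lam j)%N.

Definition WD (n k : nat) (lam : nat -> nat) : int :=
  (wt k lam)%:Z - (deg k lam)%:Z + n%:Z - k%:Z.

(* h_i = floor((i-1)/(n-1)) + 1  (divz is floor division for positive divisor) *)
Definition hh (n : nat) (i : int) : int := ((i - 1) %/ (n%:Z - 1))%Z + 1.

Definition lev (n : nat) (i : int) (k : nat) (lam : nat -> nat) : int :=
  hh n i * WD n k lam + (deg k lam)%:Z - 1.

From mathcomp Require Import all_boot all_order all_algebra.
From mathcomp Require Import zify.
Import Order.TTheory GRing.Theory Num.Theory.
Local Open Scope ring_scope.

(* Since wt - deg = sum_j (j - 1) lambda_j, WD exceeds n - k by this
   nonnegative excess, which vanishes exactly when only lambda_1 can be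
   nonzero.  For the level bound, i >= -1 and n >= 3 give h_i >= 0 and
   i <= (n - 1) h_i, so lev_i <= i forces h_i (excess - k + 1) <= 1 - deg;
   combined with excess <= (k - 2) deg this yields excess <= k - 2 as soon
   as k >= 2, whereas k = 1 leaves only the element d_1. *)

Definition excess (k : nat) (lam : nat -> nat) : nat :=
  (\sum_(1 <= j < k) (j - 1) * lam j)%N.

Lemma wtE k lam : wt k lam = (excess k lam + deg k lam)%N.
Proof.
rewrite /wt /excess /deg -big_split; apply: eq_big_nat => j /andP[j_gt0 _].
by case: j j_gt0 => // j _; rewrite subSS subn0 mulSn addnC.
Qed.

Lemma WDE n k lam : WD n k lam = (excess k lam)%:Z + n%:Z - k%:Z.
Proof. rewrite /WD wtE PoszD; lia. Qed.

Lemma excess_le k lam : (excess k lam <= k.-2 * deg k lam)%N.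
Proof.
rewrite /excess /deg big_distrr /= big_nat_cond [X in (_ <= X)%N]big_nat_cond.
apply: leq_sum => j /andP[/andP[j_gt0 j_lt_k] _]; apply: leq_mul => //; lia.
Qed.

Lemma excess_eq0 k lam :
  (excess k lam = 0)%N <-> (forall j, (2 <= j < k)%N -> lam j = 0%N).
Proof.
rewrite /excess; split.
- move/eqP; rewrite sum_nat_seq_eq0 => /allP excess0 j /andP[j_ge2 j_lt_k].
  have /excess0 /= : j \in index_iota 1 k by rewrite mem_index_iota; lia.
  by rewrite muln_eq0 => /orP[] /eqP; [lia | ].
- move=> lam0; apply: big1_seq => j /andP[_]; rewrite mem_index_iota => j_in.
  have [j_ge2 | j_lt2] := leqP 2 j; first by rewrite lam0 ?muln0 //; lia.
  by have -> : (j - 1 = 0)%N by lia.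
Qed.

Lemma hh_ge0 {n i} : (3 <= n)%N -> -1 <= i -> 0 <= hh n i.
Proof.
move=> n_ge3 i_ge; rewrite /hh.
have n1_gt0 : (0 : int) < n%:Z - 1 by lia.
have := ltz_ceil (i - 1) n1_gt0; nia.
Qed.

Lemma le_hh {n} i : (2 <= n)%N -> i <= (n%:Z - 1) * hh n i.
Proof.
move=> n_ge2; rewrite /hh.
have n1_gt0 : (0 : int) < n%:Z - 1 by lia.
have := ltz_ceil (i - 1) n1_gt0; nia.
Qed.

Lemma excess_le_of_lev {n i k} lam :
  (3 <= n)%N -> (2 <= k)%N -> -1 <= i -> lev n i k lam <= i ->
  (excess k lam <= k - 2)%N.
Proof.
move=> n_ge3 k_ge2 i_ge; rewrite /lev WDE.
have h_ge0 := hh_ge0 n_ge3 i_ge.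
have i_le := le_hh i (ltnW n_ge3).
have s_le := excess_le k lam.
set h := hh n i in h_ge0 i_le *.
set s := excess k lam in s_le *; set d := deg k lam in s_le *.
move=> lev_le.
have [d0 | d_gt0] := posnP d; first by move: s_le; rewrite d0 muln0; lia.
suff d1_or_le : d = 1%N \/ (s <= k - 2)%N.
  by case: d1_or_le => // d1; move: s_le; rewrite d1 muln1; lia.
have [h0 | h_gt0] := eqVneq h 0.
  by rewrite h0 mulr0 in i_le; rewrite h0 mul0r in lev_le; lia.
have step : h * (s%:Z - k%:Z + 1) <= 1 - d%:Z by nia.
have [s_eq | s_neq] := eqVneq (s%:Z - k%:Z + 1) 0.
  by move: step; rewrite s_eq mulr0; lia.
nia.
Qed.

Theorem lemma2p2 (n k : nat) (lam : nat -> nat) :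
  (3 <= n)%N -> inB n k lam ->
  [/\ n%:Z - k%:Z <= WD n k lam,
      (WD n k lam = n%:Z - k%:Z <-> (forall j : nat, (2 <= j)%N -> lam j = 0%N)) &
      forall i : int, -1 <= i -> lev n i k lam <= i ->
        WD n k lam <= n%:Z - 1 /\
        (WD n k lam = n%:Z - 1 <-> (k = 1%N /\ forall j : nat, (1 <= j)%N -> lam j = 0%N))].
Proof.
move=> n_ge3 [/andP[k_gt0 k_le_n] lam0]; rewrite WDE.
split=> [| | i i_ge lev_le]; first lia.
- split=> [WD_eq | lam_ge2_0].
  + have /excess_eq0 lam_mid0 : excess k lam = 0%N by lia.
    move=> j j_ge2; have [j_lt_k | k_le_j] := ltnP j k; last exact: lam0.
    by apply: lam_mid0; rewrite j_ge2.
  + by have -> : excess k lam = 0%N by apply/excess_eq0 => j /andP[/lam_ge2_0 ->].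
- have [k1 | k_ne1] := eqVneq k 1%N.
    by subst k; rewrite /excess big_geq.
  have k_ge2 : (2 <= k)%N by lia.
  have s_le := excess_le_of_lev lam n_ge3 k_ge2 i_ge lev_le.
  by split; [lia | split=> [| []]; lia].
Qed.
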